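(* For each integer $n\ge0$ let $$f_n(x)=\frac{2}{\sqrt{\pi}}\sum_{k=0}^{n} c_{n,k}\,x^{k+1}\Big[p(k,0)+(-1)^k p(k,x)e^{-x^2}\Big]$$ and $\varepsilon_n(x)=\operatorname{erf}(x)-f_n(x)$. Then for every fixed $x>0$, $$\lim_{n\to\infty}\varepsilon_n'(x)=0,\qquad \lim_{n\to\infty}\varepsilon_n(x)=0,\qquad \lim_{n\to\infty}f_n(x)=\operatorname{erf}(x).$$ The convergence of $f_n$ to $\operatorname{erf}$ on $x>0$ is not uniform.
   Context: $\operatorname{erf}(x)=\frac{2}{\sqrt{\pi}}\int_0^x e^{-\lambda^2}\,d\lambda$. For integers $0\le k\le n$, $c_{n,k}=\frac{n!}{(n-k)!\,(k+1)!}\cdot\frac{(2n+1-k)!}{2\,(2n+1)!}$. The polynomials $p(k,x)$ are defined recursively by $p(0,x)=1$ and $p(k,x)=\frac{d}{dx}p(k-1,x)-2x\,p(k-1,x)$ for $k\ge1$. *)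

From Stdlib Require Import Reals Factorial.
From Coquelicot Require Import Coquelicot.
Open Scope R_scope.

Definition erf (x : R) : R :=
  2 / sqrt PI * RInt (fun l => exp (- l ^ 2)) 0 x.

Definition c (n k : nat) : R :=
  INR (Factorial.fact n) / (INR (Factorial.fact (n - k)) * INR (Factorial.fact (k + 1)))
  * (INR (Factorial.fact (2 * n + 1 - k)) / (2 * INR (Factorial.fact (2 * n + 1)))).

Fixpoint p (k : nat) : R -> R :=
  match k with
  | O => fun _ => 1
  | S k' => fun x => Derive (p k') x - 2 * x * p k' x
  end.

Definition f_n (n : nat) (x : R) : R :=
  2 / sqrt PI *
  sum_f_R0 (fun k => c n k * x ^ (k + 1) * (p k 0 + (-1) ^ k * p k x * exp (- x ^ 2))) n.

Definition eps_n (n : nat) (x : R) : R := erf x - f_n n x.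

(* The error is an explicit Hermite-Pade remainder.  Integrating 2n+2 times by parts against
   P(t) = t^(n+1) (t - x)^(n+1), whose derivatives of order at most n vanish at 0 and at x,
   gives
     eps_n x = 2/sqrt(pi) / (2n+2)! * Int_0^x P(t) (d/dt)^(2n+2) exp(-t^2) dt,
   the boundary terms being exactly the sum defining f_n.  Since
   (d/dt)^k exp(-t^2) = p(k,t) exp(-t^2) with |p(k,t)| <= (2x+2)^k (k/2)! on [0,x], the
   integral is at most x^(2n+3) (2x+2)^(2n+2) (n+1)!, and the factor 1/(2n+2)! leaves
   O(C^n / n!).  The derivative of eps_n is the same kind of integral, because the kernel is
   polynomial in x and vanishes on the diagonal t = x.
   Convergence is not uniform: for even n the polynomial part of f_n has degree n+1 >= 2 and
   leading coefficient c(n,n) p(n,0) <> 0, while its Gaussian part stays bounded and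
   |erf x| <= 2x/sqrt(pi). *)

From Stdlib Require Import Reals Lra Lia Factorial.
From Coquelicot Require Import Coquelicot.
Open Scope R_scope.

Lemma sum_f_R0_telescope (u : nat -> R) N :
  sum_f_R0 (fun k => u k - u (S k)) N = u 0%nat - u (S N).
Proof. induction N as [|N IH]; simpl; [|rewrite IH]; ring. Qed.

Lemma sum_f_R0_tail_zero (f : nat -> R) N M : (N <= M)%nat ->
  (forall k, (N < k <= M)%nat -> f k = 0) -> sum_f_R0 f M = sum_f_R0 f N.
Proof.
  intros HNM Hf. destruct (Nat.eq_dec N M) as [->|HNM']; [reflexivity|].
  rewrite (tech2 f N M) by lia.
  rewrite (sum_eq_R0 (fun i => f (S N + i)%nat)) by (intros; apply Hf; lia). ring.
Qed.

Lemma sum_f_R0_single (f : nat -> R) N j : (j <= N)%nat ->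
  (forall k, (k <= N)%nat -> k <> j -> f k = 0) -> sum_f_R0 f N = f j.
Proof.
  intros HjN Hf. rewrite (sum_f_R0_tail_zero f j N) by (try intros; try apply Hf; lia).
  destruct j as [|j]; [reflexivity|]. simpl.
  rewrite (sum_eq_R0 f j) by (intros; apply Hf; lia). ring.
Qed.

Lemma is_derive_sum_f_R0 (f : nat -> R -> R) (df : nat -> R) N x :
  (forall k, (k <= N)%nat -> is_derive (f k) x (df k)) ->
  is_derive (fun t => sum_f_R0 (fun k => f k t) N) x (sum_f_R0 df N).
Proof.
  intros Hf. rewrite <- sum_n_Reals.
  eapply is_derive_ext; [intros t; apply sum_n_Reals|].
  now apply (is_derive_sum_n (K := R_AbsRing) (V := R_NormedModule)).
Qed.

Lemma is_RInt_sum_f_R0 (f : nat -> R -> R) (I : nat -> R) N a b :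
  (forall k, (k <= N)%nat -> is_RInt (f k) a b (I k)) ->
  is_RInt (fun t => sum_f_R0 (fun k => f k t) N) a b (sum_f_R0 I N).
Proof.
  induction N as [|N IH]; intros Hf; simpl; [now apply Hf|].
  apply (is_RInt_plus (fun t => sum_f_R0 (fun k => f k t) N) (f (S N))).
  - apply IH. intros; apply Hf; lia.
  - apply Hf; lia.
Qed.

Lemma ex_RInt_of_derivable (f : R -> R) a b : (forall t, ex_derive f t) -> ex_RInt f a b.
Proof.
  intros Hf. apply (ex_RInt_continuous (V := R_CompleteNormedModule)). intros t _.
  now apply (ex_derive_continuous (K := R_AbsRing) (V := R_NormedModule)).
Qed.

Section IteratedParts.
Variables (u g : nat -> R -> R).
Hypothesis u_derive : forall k t, is_derive (u k) t (u (S k) t).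
Hypothesis g_derive : forall k t, is_derive (g k) t (g (S k) t).

Definition iterated_parts (M : nat) (t : R) : R :=
  sum_f_R0 (fun k => (-1) ^ k * u (M - k)%nat t * g k t) M.

Lemma is_RInt_iterated_parts M a b :
  is_RInt (fun t => u (S M) t * g 0%nat t - (-1) ^ S M * u 0%nat t * g (S M) t) a b
    (iterated_parts M b - iterated_parts M a).
Proof.
  set (V k t := (-1) ^ k * u (S M - k)%nat t * g k t).
  apply (is_RInt_derive (iterated_parts M)).
  - intros t _. unfold iterated_parts.
    replace (u (S M) t * g 0%nat t - (-1) ^ S M * u 0%nat t * g (S M) t)
      with (V 0%nat t - V (S M) t) by (unfold V; rewrite Nat.sub_diag; simpl; ring).
    rewrite <- (sum_f_R0_telescope (fun k => V k t)).
    apply is_derive_sum_f_R0. intros k Hk.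
    replace (V k t - V (S k) t)
      with ((-1) ^ k * (u (S (M - k)) t * g k t + u (M - k)%nat t * g (S k) t))
      by (unfold V; replace (S M - k)%nat with (S (M - k)) by lia; simpl; ring).
    eapply is_derive_ext; [intros s; symmetry; apply Rmult_assoc|].
    apply (is_derive_scal (fun t => u (M - k)%nat t * g k t)).
    apply (is_derive_mult (u (M - k)%nat) (g k)); auto.
    intros; apply Rmult_comm.
  - intros t _.
    assert (Hc : forall f : nat -> R -> R, (forall k s, is_derive (f k) s (f (S k) s)) ->
                   forall k, continuous (f k) t).
    { intros f Hf k. apply (ex_derive_continuous (K := R_AbsRing) (V := R_NormedModule)).
      eexists; apply Hf. }
    apply (continuous_minus (V := R_NormedModule)); apply (continuous_mult (K := R_AbsRing));
      try apply (continuous_mult (K := R_AbsRing)); try apply continuous_const; now apply Hc.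
Qed.

End IteratedParts.

Lemma Derive_n_pow_sub e r c t :
  Derive_n (fun t => (t - c) ^ e) r t =
  if Compare_dec.le_dec r e
  then INR (fact e) / INR (fact (e - r)) * (t - c) ^ (e - r) else 0.
Proof. exact (eq_trans (Derive_n_comp_trans (fun x => x ^ e) r t (- c)) (Derive_n_pow r e _)). Qed.

Lemma ex_derive_n_pow_sub e r c t : ex_derive_n (fun t => (t - c) ^ e) r t.
Proof. apply (ex_derive_n_comp_trans (fun x => x ^ e)), ex_derive_n_pow. Qed.

Section ShiftedPolynomial.
Variables (P : R -> R) (s d : nat) (c : R) (b : nat -> R).
Hypothesis P_expand : forall t, P t = sum_f_R0 (fun i => b i * (t - c) ^ (s + i)) d.

Lemma Derive_n_shifted_poly r t :
  Derive_n P r t = sum_f_R0 (fun i => b i * Derive_n (fun t => (t - c) ^ (s + i)) r t) d.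
Proof.
  rewrite (Derive_n_ext _ _ r t P_expand), <- sum_n_Reals.
  erewrite Derive_n_ext by (intros; symmetry; apply sum_n_Reals).
  rewrite Derive_n_sum_n.
  - apply sum_n_ext. intros i. apply Derive_n_scal_l.
  - apply filter_forall. intros x i j _ _. apply ex_derive_n_scal_l, ex_derive_n_pow_sub.
Qed.

Lemma is_derive_Derive_n_shifted_poly r t : is_derive (Derive_n P r) t (Derive_n P (S r) t).
Proof.
  apply Derive_correct.
  change (ex_derive_n P (S r) t).
  apply (ex_derive_n_ext (fun t => sum_n (fun i => b i * (t - c) ^ (s + i)) d)).
  { intros; rewrite sum_n_Reals; symmetry; apply P_expand. }
  apply ex_derive_n_sum_n, filter_forall. intros x i j _ _.
  apply ex_derive_n_scal_l, ex_derive_n_pow_sub.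
Qed.

Lemma Derive_n_shifted_poly_center_lt r : (r < s)%nat -> Derive_n P r c = 0.
Proof.
  intros Hr. rewrite Derive_n_shifted_poly. apply sum_eq_R0. intros i _.
  rewrite Derive_n_pow_sub. destruct Compare_dec.le_dec; [|ring].
  rewrite Rminus_diag, pow_i by lia. ring.
Qed.

Lemma Derive_n_shifted_poly_center i : (i <= d)%nat ->
  Derive_n P (s + i) c = b i * INR (fact (s + i)).
Proof.
  intros Hi. rewrite Derive_n_shifted_poly, (sum_f_R0_single _ d i Hi).
  - rewrite Derive_n_pow_sub. destruct Compare_dec.le_dec; [|lia].
    rewrite Nat.sub_diag, pow_O. simpl INR. field.
  - intros k _ Hk. rewrite Derive_n_pow_sub. destruct Compare_dec.le_dec; [|ring].
    rewrite Rminus_diag, pow_i by lia. ring.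
Qed.

Lemma Derive_n_shifted_poly_top t : Derive_n P (s + d) t = b d * INR (fact (s + d)).
Proof.
  rewrite Derive_n_shifted_poly, (sum_f_R0_single _ d d (le_n d)).
  - rewrite Derive_n_pow_sub. destruct Compare_dec.le_dec; [|lia].
    rewrite Nat.sub_diag, pow_O. simpl INR. field.
  - intros k Hk Hkd. rewrite Derive_n_pow_sub. destruct Compare_dec.le_dec; [lia|ring].
Qed.

End ShiftedPolynomial.

Section SeparableKernel.
Variables (K : R -> R -> R) (alpha beta : nat -> R -> R) (d : nat).
Hypothesis K_expand : forall z t, K z t = sum_f_R0 (fun i => alpha i z * beta i t) d.
Hypothesis beta_continuous : forall i t, continuous (beta i) t.

Lemma is_RInt_beta i a z : is_RInt (beta i) a z (RInt (beta i) a z).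
Proof.
  apply (RInt_correct (V := R_CompleteNormedModule)).
  apply (ex_RInt_continuous (V := R_CompleteNormedModule)). intros; apply beta_continuous.
Qed.

Lemma RInt_separable (gamma : nat -> R) (k : R -> R) a z :
  (forall t, k t = sum_f_R0 (fun i => gamma i * beta i t) d) ->
  RInt k a z = sum_f_R0 (fun i => gamma i * RInt (beta i) a z) d.
Proof.
  intros Hk. apply is_RInt_unique.
  eapply is_RInt_ext; [intros t _; symmetry; apply Hk|].
  apply (is_RInt_sum_f_R0 (fun i t => gamma i * beta i t)). intros i _.
  apply (is_RInt_scal (beta i)), is_RInt_beta.
Qed.

(* Separated variables reduce the Leibniz rule to the fundamental theorem of calculus
   for each [beta i]. *)
Lemma is_derive_RInt_separable (dalpha : nat -> R) (dK : R -> R) a y :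
  (forall i, (i <= d)%nat -> is_derive (alpha i) y (dalpha i)) ->
  (forall t, is_derive (fun z => K z t) y (dK t)) ->
  is_derive (fun z => RInt (K z) a z) y (K y y + RInt dK a y).
Proof.
  intros Halpha HdK.
  assert (dK_expand : forall t, dK t = sum_f_R0 (fun i => dalpha i * beta i t) d).
  { intros t. rewrite <- (is_derive_unique _ _ _ (HdK t)). apply is_derive_unique.
    eapply is_derive_ext; [intros z; symmetry; apply K_expand|].
    apply (is_derive_sum_f_R0 (fun i z => alpha i z * beta i t)). intros i Hi.
    apply (is_derive_scal_l (K := R_AbsRing) (V := R_NormedModule) (alpha i)). auto. }
  eapply is_derive_ext.
  { intros z. symmetry. apply (RInt_separable (fun i => alpha i z)). intros; apply K_expand. }
  rewrite (RInt_separable dalpha dK) by exact dK_expand.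
  rewrite (K_expand y y), Rplus_comm, <- plus_sum.
  apply (is_derive_sum_f_R0 (fun i z => alpha i z * RInt (beta i) a z)). intros i Hi.
  apply (is_derive_mult (alpha i) (fun z => RInt (beta i) a z)); [auto| |intros; apply Rmult_comm].
  apply (is_derive_RInt (beta i) _ a); [|apply beta_continuous].
  apply filter_forall. intros; apply is_RInt_beta.
Qed.

End SeparableKernel.

Lemma is_derive_p_pair k :
  (forall t, is_derive (p k) t (-2 * INR k * p (k - 1) t)) /\
  (forall t, is_derive (p (S k)) t (-2 * INR (S k) * p k t)).
Proof.
  induction k as [|k [IHk IHSk]].
  - split; intros t; simpl.
    + auto_derive; auto. ring.
    + apply (is_derive_ext (fun s => -2 * s)).
      { intros s. simpl. rewrite Derive_const. ring. }
      auto_derive; auto. ring.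
  - split; [intros s; replace (S k - 1)%nat with k by lia; apply IHSk|]. intros t.
    assert (p_SS : forall s, p (S (S k)) s = -2 * INR (S k) * p k s - 2 * s * p (S k) s).
    { intros s. change (p (S (S k)) s) with (Derive (p (S k)) s - 2 * s * p (S k) s).
      now rewrite (is_derive_unique _ _ _ (IHSk s)). }
    assert (p_S : p (S k) t = -2 * INR k * p (k - 1) t - 2 * t * p k t).
    { change (p (S k) t) with (Derive (p k) t - 2 * t * p k t).
      now rewrite (is_derive_unique _ _ _ (IHk t)). }
    eapply is_derive_ext; [intros s; symmetry; apply p_SS|].
    replace (S (S k) - 1)%nat with (S k) by lia. rewrite p_S.
    set (q0 := p k) in *. set (q1 := p (S k)) in *. clearbody q0 q1.
    rewrite !S_INR in *.
    auto_derive; [repeat split; eexists; [apply IHk|apply IHSk]|].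
    replace (Derive (fun s => q0 s) t) with (-2 * INR k * p (k - 1) t)
      by (symmetry; apply is_derive_unique, IHk).
    replace (Derive (fun s => q1 s) t) with (-2 * (INR k + 1) * q0 t)
      by (symmetry; apply is_derive_unique, IHSk).
    rewrite p_S. ring.
Qed.

Lemma is_derive_p k t : is_derive (p k) t (-2 * INR k * p (k - 1) t).
Proof. apply is_derive_p_pair. Qed.

Lemma p_succ k t : p (S k) t = -2 * INR k * p (k - 1) t - 2 * t * p k t.
Proof.
  change (p (S k) t) with (Derive (p k) t - 2 * t * p k t).
  now rewrite (is_derive_unique _ _ _ (is_derive_p k t)).
Qed.

Definition gauss_deriv (k : nat) (t : R) : R := p k t * exp (- t ^ 2).

Lemma is_derive_gauss_deriv k t : is_derive (gauss_deriv k) t (gauss_deriv (S k) t).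
Proof.
  unfold gauss_deriv. auto_derive; [eexists; apply is_derive_p|].
  change (p (S k) t) with (Derive (p k) t - 2 * t * p k t).
  change (Derive (fun s => p k s) t) with (Derive (p k) t). simpl pow. ring.
Qed.

Lemma gauss_deriv_0 k : gauss_deriv k 0 = p k 0.
Proof. unfold gauss_deriv. rewrite pow_i, Ropp_0, exp_0 by lia. ring. Qed.

Lemma p_double_0_neq_0 j : p (2 * j) 0 <> 0.
Proof.
  induction j as [|j IH]; [simpl; lra|].
  replace (2 * S j)%nat with (S (S (2 * j))) by lia.
  rewrite p_succ. replace (S (2 * j) - 1)%nat with (2 * j)%nat by lia.
  rewrite Rmult_0_r, Rmult_0_l, Rminus_0_r.
  apply Rmult_integral_contrapositive. split; [|exact IH].
  pose proof (pos_INR (S (2 * j))). pose proof (not_0_INR (S (2 * j)) ltac:(lia)). nra.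
Qed.

Lemma succ_le_double_succ_div2 k : (S k <= 2 * S (Nat.div2 k))%nat.
Proof. pose proof (Nat.div2_odd k). destruct (Nat.odd k); simpl in *; lia. Qed.

Section HermiteBound.
Variables (x t : R).
Hypothesis Ht : Rabs t <= x.
Let A := 2 * x + 2.

Lemma Rabs_p_le_step k :
  Rabs (p k t) <= A ^ k * INR (fact (Nat.div2 k)) ->
  Rabs (p (S k) t) <= A ^ S k * INR (fact (Nat.div2 (S k))) ->
  Rabs (p (S (S k)) t) <= A ^ S (S k) * INR (fact (S (Nat.div2 k))).
Proof.
  intros IHk IHSk.
  assert (Hx : 0 <= x) by (pose proof (Rabs_pos t); lra).
  set (j := Nat.div2 k). set (F := INR (fact j)). set (G := INR (fact (S j))).
  assert (HF : 0 <= F) by apply pos_INR.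
  assert (HG : G = (INR j + 1) * F) by (unfold G, F; rewrite fact_simpl, mult_INR, S_INR; ring).
  assert (Hkj : INR k + 1 <= 2 * (INR j + 1)).
  { rewrite <- S_INR. replace 2 with (INR 2) by reflexivity. rewrite <- S_INR, <- mult_INR.
    apply le_INR, succ_le_double_succ_div2. }
  assert (HSk : INR (fact (Nat.div2 (S k))) <= G).
  { apply le_INR, fact_le, Nat.div2_le_upper_bound, succ_le_double_succ_div2. }
  assert (HAk : 0 < A ^ k) by (apply pow_lt; unfold A; lra).
  assert (Hpk : 2 * (INR k + 1) * Rabs (p k t) <= 4 * A ^ k * G).
  { apply Rle_trans with (2 * (INR k + 1) * (A ^ k * F)).
    - apply Rmult_le_compat_l; [pose proof (pos_INR k); lra|exact IHk].
    - assert (0 <= A ^ k * F) by (apply Rmult_le_pos; lra). rewrite HG. nra. }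
  assert (HpSk : 2 * Rabs t * Rabs (p (S k) t) <= 2 * x * A * A ^ k * G).
  { assert (Rabs t * Rabs (p (S k) t) <= x * (A ^ S k * G)).
    { apply Rmult_le_compat; try apply Rabs_pos; [exact Ht|].
      eapply Rle_trans; [exact IHSk|].
      apply Rmult_le_compat_l; [apply pow_le; unfold A; lra|exact HSk]. }
    simpl pow in *. rewrite !Rmult_assoc in *. lra. }
  rewrite p_succ. replace (S k - 1)%nat with k by lia.
  eapply Rle_trans; [apply Rabs_triang|].
  rewrite Rabs_Ropp, !Rabs_mult, (Rabs_left (-2)), (Rabs_right 2), (Rabs_right (INR (S k)))
    by (try apply Rle_ge, pos_INR; lra).
  rewrite S_INR. fold G. simpl pow.
  assert (HAG : 0 <= A ^ k * G) by (apply Rmult_le_pos; [lra|apply pos_INR]).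
  assert (HA2 : 4 + 2 * x * A <= A * A) by (unfold A; nra).
  assert (A ^ k * G * (4 + 2 * x * A) <= A ^ k * G * (A * A)) by (apply Rmult_le_compat_l; lra).
  lra.
Qed.

Lemma Rabs_p_le k : Rabs (p k t) <= (2 * x + 2) ^ k * INR (fact (Nat.div2 k)).
Proof.
  enough (H : forall k, (Rabs (p k t) <= A ^ k * INR (fact (Nat.div2 k))) /\
                        (Rabs (p (S k) t) <= A ^ S k * INR (fact (Nat.div2 (S k)))))
    by exact (proj1 (H k)).
  clear k. intros k. induction k as [|k [IHk IHSk]].
  - assert (Hx : 0 <= x) by (pose proof (Rabs_pos t); lra).
    split; simpl.
    + rewrite Rabs_R1. lra.
    + rewrite Derive_const, Rmult_1_r, Rminus_0_l, Rabs_Ropp, Rabs_mult, Rabs_right by lra.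
      unfold A. lra.
  - split; [exact IHSk|]. now apply Rabs_p_le_step.
Qed.

End HermiteBound.

Definition node_poly (n : nat) (y t : R) : R := t ^ S n * (t - y) ^ S n.

Lemma node_poly_expand_0 n y t :
  node_poly n y t =
  sum_f_R0 (fun i => Binomial.C (S n) i * (- y) ^ (S n - i) * (t - 0) ^ (S n + i)) (S n).
Proof.
  unfold node_poly. rewrite Rminus_0_r. unfold Rminus at 1. rewrite binomial, scal_sum.
  apply sum_eq. intros i _. rewrite pow_add. ring.
Qed.

Lemma node_poly_expand_y n y t :
  node_poly n y t =
  sum_f_R0 (fun i => Binomial.C (S n) i * y ^ (S n - i) * (t - y) ^ (S n + i)) (S n).
Proof.
  unfold node_poly. replace t with ((t - y) + y) at 1 by ring.
  rewrite binomial, Rmult_comm, scal_sum.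
  apply sum_eq. intros i _. rewrite pow_add. ring.
Qed.

Lemma binomial_fact_c n k : (k <= n)%nat ->
  Binomial.C (S n) (n - k) * INR (fact (2 * n + 1 - k)) = INR (fact (2 * n + 2)) * c n k.
Proof.
  intros Hk. unfold Binomial.C, c.
  replace (S n - (n - k))%nat with (k + 1)%nat by lia.
  replace (2 * n + 2)%nat with (S (2 * n + 1)) by lia.
  rewrite (fact_simpl (2 * n + 1)), (fact_simpl n), !mult_INR, !S_INR, plus_INR, mult_INR.
  simpl (INR 2). simpl (INR 1).
  field. repeat split; try apply INR_fact_neq_0; pose proof (pos_INR n); lra.
Qed.

Lemma iterated_parts_node_poly n y :
  iterated_parts (Derive_n (node_poly n y)) gauss_deriv (2 * n + 1) y
  - iterated_parts (Derive_n (node_poly n y)) gauss_deriv (2 * n + 1) 0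
  = INR (fact (2 * n + 2)) *
    sum_f_R0 (fun k => c n k * y ^ (k + 1) * (p k 0 + (-1) ^ k * p k y * exp (- y ^ 2))) n.
Proof.
  set (P := node_poly n y).
  unfold iterated_parts. rewrite <- minus_sum.
  rewrite (sum_f_R0_tail_zero _ n) by (try lia; intros k Hk;
    rewrite (Derive_n_shifted_poly_center_lt P (S n) (S n) y _ (node_poly_expand_y n y)),
            (Derive_n_shifted_poly_center_lt P (S n) (S n) 0 _ (node_poly_expand_0 n y)) by lia;
    ring).
  rewrite scal_sum. apply sum_eq. intros k Hk.
  replace (2 * n + 1 - k)%nat with (S n + (n - k))%nat by lia.
  rewrite (Derive_n_shifted_poly_center P (S n) (S n) y _ (node_poly_expand_y n y)),
          (Derive_n_shifted_poly_center P (S n) (S n) 0 _ (node_poly_expand_0 n y)) by lia.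
  replace (S n + (n - k))%nat with (2 * n + 1 - k)%nat by lia.
  replace (S n - (n - k))%nat with (S k) by lia.
  rewrite gauss_deriv_0. unfold gauss_deriv.
  assert (E : forall a : R, Binomial.C (S n) (n - k) * a * INR (fact (2 * n + 1 - k))
                 = INR (fact (2 * n + 2)) * c n k * a)
    by (intros a; rewrite <- binomial_fact_c by lia; ring).
  rewrite !E. replace (k + 1)%nat with (S k) by lia.
  replace (- y) with (-1 * y) by ring. rewrite Rpow_mult_distr. simpl pow.
  assert (Hs : (-1) ^ k = 1 \/ (-1) ^ k = -1).
  { destruct (Nat.Even_or_Odd k) as [[j ->] | [j ->]];
      [left; apply pow_1_even | right; rewrite Nat.add_1_r; apply pow_1_odd]. }
  destruct Hs as [-> | ->]; ring.
Qed.

Lemma ex_RInt_gauss_deriv_mul (f : R -> R) k a b :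
  (forall t, ex_derive f t) -> ex_RInt (fun t => f t * gauss_deriv k t) a b.
Proof.
  intros Hf. apply ex_RInt_of_derivable. intros t.
  apply ex_derive_mult; [apply Hf|eexists; apply is_derive_gauss_deriv].
Qed.

Lemma is_RInt_gauss_node_poly n y :
  is_RInt (fun t => INR (fact (2 * n + 2)) * gauss_deriv 0 t
                    - node_poly n y t * gauss_deriv (2 * n + 2) t) 0 y
    (INR (fact (2 * n + 2)) *
     sum_f_R0 (fun k => c n k * y ^ (k + 1) * (p k 0 + (-1) ^ k * p k y * exp (- y ^ 2))) n).
Proof.
  rewrite <- iterated_parts_node_poly.
  eapply is_RInt_ext; [|apply is_RInt_iterated_parts].
  - intros t _. replace (S (2 * n + 1)) with (S n + S n)%nat by lia.
    rewrite (Derive_n_shifted_poly_top _ _ _ _ _ (node_poly_expand_0 n y)).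
    replace (S n + S n)%nat with (2 * S n)%nat by lia.
    rewrite C_n_n, Nat.sub_diag, pow_1_even, pow_O. simpl Derive_n.
    replace (2 * S n)%nat with (2 * n + 2)%nat by lia. rewrite !Rmult_1_l. reflexivity.
  - apply is_derive_Derive_n_shifted_poly with (1 := node_poly_expand_0 n y).
  - apply is_derive_gauss_deriv.
Qed.

Lemma eps_n_eq_RInt n y :
  eps_n n y = 2 / sqrt PI / INR (fact (2 * n + 2)) *
              RInt (fun t => node_poly n y t * gauss_deriv (2 * n + 2) t) 0 y.
Proof.
  set (F := INR (fact (2 * n + 2))).
  set (I0 := RInt (gauss_deriv 0) 0 y).
  set (I := RInt (fun t => node_poly n y t * gauss_deriv (2 * n + 2) t) 0 y).
  assert (Hsplit : is_RInt (fun t => F * gauss_deriv 0 t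
                                     - node_poly n y t * gauss_deriv (2 * n + 2) t) 0 y
                     (F * I0 - I)).
  { apply (is_RInt_minus (fun t => F * gauss_deriv 0 t)).
    - apply (is_RInt_scal (gauss_deriv 0)), (RInt_correct (V := R_CompleteNormedModule)).
      apply ex_RInt_of_derivable. intros t; eexists; apply is_derive_gauss_deriv.
    - apply (RInt_correct (V := R_CompleteNormedModule)), ex_RInt_gauss_deriv_mul.
      intros t. unfold node_poly. auto_derive; auto. }
  assert (Herf : erf y = 2 / sqrt PI * I0).
  { unfold erf, I0. f_equal. apply RInt_ext. intros t _. unfold gauss_deriv. simpl. ring. }
  pose proof (is_RInt_unique _ _ _ _ (is_RInt_gauss_node_poly n y)) as E. fold F in E.
  rewrite (is_RInt_unique _ _ _ _ Hsplit) in E.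
  unfold eps_n, f_n. rewrite Herf.
  set (Q := sum_f_R0 _ n) in *.
  replace I with (F * I0 - F * Q) by lra.
  assert (F <> 0) by apply INR_fact_neq_0.
  assert (sqrt PI <> 0) by (apply Rgt_not_eq, sqrt_lt_R0, PI_RGT_0).
  field. auto.
Qed.

Lemma is_derive_eps_n n y :
  is_derive (eps_n n) y
    (2 / sqrt PI / INR (fact (2 * n + 2)) *
     (- INR (S n) * RInt (fun t => t ^ S n * (t - y) ^ n * gauss_deriv (2 * n + 2) t) 0 y)).
Proof.
  set (g := gauss_deriv (2 * n + 2)).
  set (J := RInt (fun t => t ^ S n * (t - y) ^ n * g t) 0 y).
  eapply is_derive_ext; [intros z; symmetry; apply eps_n_eq_RInt|].
  apply (is_derive_scal (fun z => RInt (fun t => node_poly n z t * g t) 0 z)).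
  set (alpha i z := Binomial.C (S n) i * (- z) ^ (S n - i)).
  assert (Hsep := is_derive_RInt_separable (fun z t => node_poly n z t * g t) alpha
                    (fun i t => t ^ (S n + i) * g t) (S n)).
  replace (- INR (S n) * J) with
    (node_poly n y y * g y + RInt (fun t => - INR (S n) * (t ^ S n * (t - y) ^ n * g t)) 0 y).
  - apply Hsep with (dalpha := fun i => Derive (alpha i) y).
    + intros z t. rewrite node_poly_expand_0, Rminus_0_r, Rmult_comm, scal_sum.
      apply sum_eq. intros i _. unfold alpha. ring.
    + intros i t. apply (ex_derive_continuous (K := R_AbsRing) (V := R_NormedModule)).
      apply ex_derive_mult; [auto_derive; auto|eexists; apply is_derive_gauss_deriv].
    + intros i _. apply Derive_correct. unfold alpha. auto_derive; auto.
    + intros t. unfold node_poly. auto_derive; auto.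
      change (match n with 0%nat => 1 | S _ => INR n + 1 end) with (INR (S n)).
      simpl pow. unfold Rminus. ring.
  - unfold node_poly. rewrite Rminus_diag, pow_i by lia.
    rewrite (is_RInt_unique _ 0 y (- INR (S n) * J)); [ring|].
    apply (is_RInt_scal (fun t => t ^ S n * (t - y) ^ n * g t)).
    apply (RInt_correct (V := R_CompleteNormedModule)).
    apply ex_RInt_gauss_deriv_mul. intros t. auto_derive; auto.
Qed.

Lemma exp_neg_le_1 z : 0 <= z -> exp (- z) <= 1.
Proof.
  intros Hz. pose proof (exp_ineq1_le z). pose proof (exp_pos (- z)).
  assert (E : exp (- z) * exp z = 1) by (rewrite <- exp_plus, Rplus_opp_l; apply exp_0).
  nra.
Qed.

Lemma Rabs_gauss_deriv_le x t k : Rabs t <= x ->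
  Rabs (gauss_deriv k t) <= (2 * x + 2) ^ k * INR (fact (Nat.div2 k)).
Proof.
  intros Ht. unfold gauss_deriv.
  rewrite Rabs_mult, (Rabs_right (exp _)) by apply Rle_ge, Rlt_le, exp_pos.
  pose proof (exp_neg_le_1 (t ^ 2) (pow2_ge_0 t)). pose proof (Rabs_p_le x t Ht k).
  pose proof (Rabs_pos (p k t)). pose proof (exp_pos (- t ^ 2)). nra.
Qed.

Lemma Rabs_node_integral_le n j x : 0 <= x ->
  Rabs (RInt (fun t => t ^ S n * (t - x) ^ j * gauss_deriv (2 * n + 2) t) 0 x)
  <= x ^ (S n + j + 1) * ((2 * x + 2) ^ (2 * n + 2) * INR (fact (S n))).
Proof.
  intros Hx. set (M := (2 * x + 2) ^ (2 * n + 2) * INR (fact (S n))).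
  eapply Rle_trans.
  - apply (abs_RInt_le_const _ 0 x (x ^ (S n + j) * M)); [exact Hx| |].
    + apply ex_RInt_gauss_deriv_mul. intros t. auto_derive; auto.
    + intros t Ht. rewrite Rabs_mult, pow_add.
      apply Rmult_le_compat; try apply Rabs_pos.
      * rewrite Rabs_mult, <- !RPow_abs.
        apply Rmult_le_compat; try (apply pow_le, Rabs_pos); apply pow_incr;
          split; try apply Rabs_pos; [rewrite Rabs_right|rewrite Rabs_left1]; lra.
      * eapply Rle_trans; [apply (Rabs_gauss_deriv_le x); rewrite Rabs_right; lra|].
        replace (2 * n + 2)%nat with (2 * S n)%nat by lia.
        rewrite Nat.div2_double. unfold M. replace (2 * n + 2)%nat with (2 * S n)%nat by lia. lra.
  - rewrite Rminus_0_r, Nat.add_1_r, <- tech_pow_Rmult. right; ring.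
Qed.

Lemma fact_mul_le_fact_add a b : (fact a * fact b <= fact (a + b))%nat.
Proof.
  induction b as [|b IH]; [rewrite Nat.add_0_r; simpl; lia|].
  rewrite Nat.add_succ_r, !fact_simpl. nia.
Qed.

Lemma succ_fact_div_fact_double_le n :
  INR (S n) * INR (fact (S n)) / INR (fact (2 * n + 2)) <= / INR (fact n).
Proof.
  assert (HF2 := INR_fact_lt_0 (2 * n + 2)). assert (HFn := INR_fact_lt_0 n).
  apply (Rmult_le_reg_r (INR (fact (2 * n + 2)) * INR (fact n))); [nra|].
  replace (INR (S n) * INR (fact (S n)) / INR (fact (2 * n + 2))
           * (INR (fact (2 * n + 2)) * INR (fact n)))
    with (INR (fact (S n)) * INR (fact (S n))) by (rewrite fact_simpl, mult_INR; field; lra).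
  replace (/ INR (fact n) * (INR (fact (2 * n + 2)) * INR (fact n))) with (INR (fact (2 * n + 2)))
    by (field; lra).
  rewrite <- mult_INR. replace (2 * n + 2)%nat with (S n + S n)%nat by lia.
  apply le_INR, fact_mul_le_fact_add.
Qed.

Lemma two_div_sqrt_PI_pos : 0 < 2 / sqrt PI.
Proof. apply Rdiv_lt_0_compat; [lra|apply sqrt_lt_R0, PI_RGT_0]. Qed.

Lemma is_lim_seq_le_pow_div_fact (v : nat -> R) C L :
  (forall n, Rabs (v n) <= C * (L ^ n / INR (fact n))) -> is_lim_seq v 0.
Proof.
  intros Hv.
  assert (Hlim : is_lim_seq (fun n => C * (L ^ n / INR (fact n))) 0).
  { replace (Finite 0) with (Rbar_mult C 0) by (simpl; f_equal; ring).
    apply is_lim_seq_scal_l, is_lim_seq_Reals, cv_speed_pow_fact. }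
  apply is_lim_seq_abs_0, (is_lim_seq_le_le _ _ _ 0 (fun n => conj (Rabs_pos (v n)) (Hv n))).
  - apply is_lim_seq_const.
  - exact Hlim.
Qed.

Lemma Rabs_node_integral_scaled_le n j x : 0 <= x -> (n <= j)%nat ->
  INR (S n) / INR (fact (2 * n + 2)) *
    Rabs (RInt (fun t => t ^ S n * (t - x) ^ j * gauss_deriv (2 * n + 2) t) 0 x)
  <= x ^ (j - n) * (x * (2 * x + 2)) ^ 2 * ((x * (2 * x + 2)) ^ 2) ^ n / INR (fact n).
Proof.
  intros Hx Hj. set (L := (x * (2 * x + 2)) ^ 2).
  assert (HF2 := INR_fact_lt_0 (2 * n + 2)). assert (HFn := INR_fact_lt_0 n).
  assert (Hm := pos_INR (S n)).
  assert (HK : 0 <= x ^ (j - n) * L ^ S n) by (apply Rmult_le_pos; apply pow_le; unfold L; nra).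
  assert (E : x ^ (S n + j + 1) * ((2 * x + 2) ^ (2 * n + 2) * INR (fact (S n)))
              = x ^ (j - n) * L ^ S n * INR (fact (S n))).
  { unfold L. rewrite <- pow_mult.
    replace (S n + j + 1)%nat with (j - n + 2 * S n)%nat by lia.
    replace (2 * n + 2)%nat with (2 * S n)%nat by lia.
    rewrite pow_add, Rpow_mult_distr. ring. }
  pose proof (succ_fact_div_fact_double_le n) as Hfact.
  eapply Rle_trans.
  { apply Rmult_le_compat_l; [apply Rdiv_le_0_compat; lra|].
    apply Rabs_node_integral_le, Hx. }
  rewrite E.
  replace (INR (S n) / INR (fact (2 * n + 2)) * (x ^ (j - n) * L ^ S n * INR (fact (S n))))
    with (x ^ (j - n) * L ^ S n * (INR (S n) * INR (fact (S n)) / INR (fact (2 * n + 2))))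
    by (field; lra).
  replace (x ^ (j - n) * L * L ^ n / INR (fact n)) with (x ^ (j - n) * L ^ S n * / INR (fact n))
    by (simpl pow; field; lra).
  apply Rmult_le_compat_l; assumption.
Qed.

Lemma is_lim_seq_Derive_eps_n x : 0 < x -> is_lim_seq (fun n => Derive (eps_n n) x) 0.
Proof.
  intros Hx. set (L := (x * (2 * x + 2)) ^ 2).
  apply (is_lim_seq_le_pow_div_fact _ (2 / sqrt PI * L) L). intros n.
  rewrite (is_derive_unique _ _ _ (is_derive_eps_n n x)).
  pose proof two_div_sqrt_PI_pos as Hc.
  pose proof (Rabs_node_integral_scaled_le n n x ltac:(lra) (le_n n)) as H.
  rewrite Nat.sub_diag, pow_O, Rmult_1_l in H. fold L in H.
  rewrite !Rabs_mult, Rabs_Ropp, (Rabs_right (INR _)) by apply Rle_ge, pos_INR.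
  rewrite (Rabs_right (2 / sqrt PI / _))
    by (apply Rle_ge, Rdiv_le_0_compat; [lra|apply INR_fact_lt_0]).
  replace (2 / sqrt PI * L * (L ^ n / INR (fact n))) with (2 / sqrt PI * (L * L ^ n / INR (fact n)))
    by (unfold Rdiv; ring).
  eapply Rle_trans; [|apply Rmult_le_compat_l; [lra|exact H]].
  right. unfold Rdiv. ring.
Qed.

Lemma is_lim_seq_eps_n x : 0 < x -> is_lim_seq (fun n => eps_n n x) 0.
Proof.
  intros Hx. set (L := (x * (2 * x + 2)) ^ 2).
  apply (is_lim_seq_le_pow_div_fact _ (2 / sqrt PI * x * L) L). intros n.
  rewrite eps_n_eq_RInt.
  pose proof two_div_sqrt_PI_pos as Hc.
  pose proof (Rabs_node_integral_scaled_le n (S n) x ltac:(lra) (le_S _ _ (le_n n))) as H.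
  rewrite Nat.sub_succ_l, Nat.sub_diag, pow_1 in H by lia. fold L in H.
  assert (HI : 1 <= INR (S n)) by (rewrite S_INR; pose proof (pos_INR n); lra).
  set (I := Rabs (RInt _ 0 x)) in H.
  rewrite Rabs_mult, (Rabs_right (2 / sqrt PI / _))
    by (apply Rle_ge, Rdiv_le_0_compat; [lra|apply INR_fact_lt_0]).
  unfold node_poly. fold I.
  assert (0 <= I / INR (fact (2 * n + 2)))
    by (apply Rdiv_le_0_compat; [apply Rabs_pos|apply INR_fact_lt_0]).
  assert (I / INR (fact (2 * n + 2)) <= x * L * L ^ n / INR (fact n)).
  { eapply Rle_trans; [|exact H]. unfold Rdiv. nra. }
  replace (2 / sqrt PI / INR (fact (2 * n + 2)) * I)
    with (2 / sqrt PI * (I / INR (fact (2 * n + 2))))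
    by (unfold Rdiv; ring).
  replace (2 / sqrt PI * x * L * (L ^ n / INR (fact n)))
    with (2 / sqrt PI * (x * L * L ^ n / INR (fact n)))
    by (unfold Rdiv; ring).
  apply Rmult_le_compat_l; lra.
Qed.

Lemma pow_mul_exp_neg_le y k : 0 <= y -> y ^ k * exp (- y) <= INR k ^ k.
Proof.
  intros Hy. destruct k as [|k]; [simpl; rewrite Rmult_1_l; now apply exp_neg_le_1|].
  set (m := INR (S k)). assert (Hm : 0 < m) by apply lt_0_INR, Nat.lt_0_succ.
  assert (Hexp : exp y = exp (y / m) ^ S k).
  { rewrite <- Rpower_pow by apply exp_pos. unfold Rpower. rewrite ln_exp.
    f_equal. fold m. field. lra. }
  assert (Hz : y / m <= exp (y / m)) by (pose proof (exp_ineq1_le (y / m)); lra).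
  assert (Hpow : (y / m) ^ S k <= exp y).
  { rewrite Hexp. apply pow_incr. split; [apply Rdiv_le_0_compat|]; lra. }
  assert (Hey : exp (- y) * exp y = 1) by (rewrite <- exp_plus, Rplus_opp_l; apply exp_0).
  unfold Rdiv in Hpow. rewrite Rpow_mult_distr, pow_inv in Hpow.
  assert (Hmk : 0 < m ^ S k) by (apply pow_lt; lra).
  assert (Hyk : y ^ S k <= m ^ S k * exp y).
  { apply (Rmult_le_reg_r (/ m ^ S k)); [apply Rinv_0_lt_compat; lra|].
    replace (m ^ S k * exp y * / m ^ S k) with (exp y) by (field; lra). exact Hpow. }
  pose proof (exp_pos (- y)). nra.
Qed.

Lemma c_pos n k : 0 < c n k.
Proof.
  unfold c. pose proof (INR_fact_lt_0 n). pose proof (INR_fact_lt_0 (n - k)).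
  pose proof (INR_fact_lt_0 (k + 1)). pose proof (INR_fact_lt_0 (2 * n + 1 - k)).
  pose proof (INR_fact_lt_0 (2 * n + 1)).
  apply Rmult_lt_0_compat; apply Rdiv_lt_0_compat; nra.
Qed.

Lemma f_n_split n x :
  f_n n x = 2 / sqrt PI * x *
    (sum_f_R0 (fun k => c n k * p k 0 * x ^ k) n
     + exp (- x ^ 2) * sum_f_R0 (fun k => c n k * (- x) ^ k * p k x) n).
Proof.
  unfold f_n. rewrite (scal_sum _ n (exp (- x ^ 2))), <- plus_sum, Rmult_assoc, (scal_sum _ n x).
  f_equal.
  apply sum_eq. intros k _.
  replace (- x) with (-1 * x) by ring. rewrite Rpow_mult_distr, Nat.add_1_r. simpl pow. ring.
Qed.

Lemma Rabs_gauss_part_bounded n : exists K, forall x, 1 <= x ->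
  Rabs (exp (- x ^ 2) * sum_f_R0 (fun k => c n k * (- x) ^ k * p k x) n) <= K.
Proof.
  exists (sum_f_R0 (fun k => c n k * 4 ^ k * INR (fact (Nat.div2 k)) * INR k ^ k) n).
  intros x Hx. rewrite scal_sum.
  eapply Rle_trans; [apply sum_f_R0_triangle|]. apply sum_Rle. intros k _.
  pose proof (c_pos n k). pose proof (exp_pos (- x ^ 2)).
  pose proof (Rabs_p_le x x (Req_le _ _ (Rabs_right x ltac:(lra))) k) as Hp.
  assert (HF := pos_INR (fact (Nat.div2 k))).
  assert (H4x : (2 * x + 2) ^ k <= (4 * x) ^ k) by (apply pow_incr; lra).
  assert (He : (x ^ 2) ^ k * exp (- x ^ 2) <= INR k ^ k) by (apply pow_mul_exp_neg_le; nra).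
  rewrite !Rabs_mult, (Rabs_right (c n k)), (Rabs_right (exp _)), <- RPow_abs, Rabs_Ropp,
    (Rabs_right x) by lra.
  apply Rle_trans with (c n k * x ^ k * ((4 * x) ^ k * INR (fact (Nat.div2 k))) * exp (- x ^ 2)).
  - apply Rmult_le_compat_r; [lra|]. apply Rmult_le_compat_l.
    + apply Rmult_le_pos; [lra|apply pow_le; lra].
    + eapply Rle_trans; [exact Hp|]. apply Rmult_le_compat_r; assumption.
  - replace (c n k * x ^ k * ((4 * x) ^ k * INR (fact (Nat.div2 k))) * exp (- x ^ 2))
      with (c n k * 4 ^ k * INR (fact (Nat.div2 k)) * ((x ^ 2) ^ k * exp (- x ^ 2)))
      by (rewrite <- pow_mult, Rpow_mult_distr, Nat.mul_comm, pow_mult; simpl pow; ring).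
    apply Rmult_le_compat_l; [|exact He].
    apply Rmult_le_pos; [apply Rmult_le_pos; [lra|apply pow_le; lra]|exact HF].
Qed.

Lemma poly_bounded_lead_coef_0 (b : nat -> R) d C :
  (forall x, 1 <= x -> Rabs (sum_f_R0 (fun k => b k * x ^ k) (S d)) <= C) -> b (S d) = 0.
Proof.
  intros Hb. set (B := sum_f_R0 (fun k => Rabs (b k)) d).
  assert (HB : 0 <= B) by (apply cond_pos_sum; intros; apply Rabs_pos).
  assert (HC : 0 <= C) by (eapply Rle_trans; [apply Rabs_pos|apply (Hb 1); lra]).
  assert (Hlin : forall x, 1 <= x -> Rabs (b (S d)) * x <= C + B).
  { intros x Hx. assert (Hxd : 1 <= x ^ d) by (apply pow_R1_Rle; lra).
    assert (Hlow : Rabs (sum_f_R0 (fun k => b k * x ^ k) d) <= B * x ^ d).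
    { eapply Rle_trans; [apply sum_f_R0_triangle|]. unfold B. rewrite Rmult_comm, scal_sum.
      apply sum_Rle. intros k Hk. rewrite Rabs_mult, <- RPow_abs, (Rabs_right x) by lra.
      apply Rmult_le_compat_l; [apply Rabs_pos|]. apply Rle_pow; assumption. }
    pose proof (Hb x Hx) as Hall. simpl sum_f_R0 in Hall at 1.
    pose proof (Rabs_triang_inv (b (S d) * x ^ S d) (- sum_f_R0 (fun k => b k * x ^ k) d)) as Htri.
    rewrite Rabs_Ropp, Rabs_mult, <- RPow_abs, (Rabs_right x) in Htri by lra.
    replace (b (S d) * x ^ S d - - sum_f_R0 (fun k => b k * x ^ k) d)
      with (sum_f_R0 (fun k => b k * x ^ k) d + b (S d) * x ^ S d) in Htri by ring.
    simpl pow in Htri.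
    assert (Rabs (b (S d)) * x * x ^ d <= (C + B) * x ^ d) by nra.
    apply (Rmult_le_reg_r (x ^ d)); lra. }
  destruct (Req_dec (b (S d)) 0) as [|Hne]; [assumption|].
  assert (Hpos : 0 < Rabs (b (S d))) by (apply Rabs_pos_lt, Hne).
  specialize (Hlin ((C + B) / Rabs (b (S d)) + 1)).
  assert (0 <= (C + B) / Rabs (b (S d))) by (apply Rdiv_le_0_compat; lra).
  replace (Rabs (b (S d)) * ((C + B) / Rabs (b (S d)) + 1)) with (C + B + Rabs (b (S d))) in Hlin
    by (field; lra).
  lra.
Qed.

Lemma Rabs_erf_le x : 0 <= x -> Rabs (erf x) <= 2 / sqrt PI * x.
Proof.
  intros Hx. unfold erf.
  pose proof two_div_sqrt_PI_pos as Hc.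
  rewrite Rabs_mult, Rabs_right by lra. apply Rmult_le_compat_l; [lra|].
  replace x with ((x - 0) * 1) at 2 by ring.
  apply abs_RInt_le_const; [exact Hx| |].
  - apply ex_RInt_of_derivable. intros t. auto_derive; auto.
  - intros t _. rewrite Rabs_right by apply Rle_ge, Rlt_le, exp_pos.
    apply exp_neg_le_1, pow2_ge_0.
Qed.

Lemma f_n_not_uniform :
  ~ (forall e : R, 0 < e ->
       exists N : nat, forall n : nat, (N <= n)%nat ->
         forall x : R, 0 < x -> Rabs (f_n n x - erf x) < e).
Proof.
  intros Hunif. destruct (Hunif 1 Rlt_0_1) as [N HN].
  set (n := (2 * S N)%nat). destruct (Rabs_gauss_part_bounded n) as [K HK].
  set (c0 := 2 / sqrt PI).
  pose proof two_div_sqrt_PI_pos as Hc. fold c0 in Hc.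
  apply (p_double_0_neq_0 (S N)). fold n.
  apply (Rmult_eq_reg_l (c n n)); [rewrite Rmult_0_r|apply Rgt_not_eq, c_pos].
  replace n with (S (2 * N + 1)) at 2 3 by (unfold n; lia).
  apply (poly_bounded_lead_coef_0 (fun k => c n k * p k 0) (2 * N + 1) (/ c0 + 1 + K)).
  intros x Hx. replace (S (2 * N + 1)) with n by (unfold n; lia). cbv beta.
  set (Pn := sum_f_R0 (fun k => c n k * p k 0 * x ^ k) n).
  set (Gn := exp (- x ^ 2) * sum_f_R0 (fun k => c n k * (- x) ^ k * p k x) n).
  assert (Hf : Rabs (c0 * x * (Pn + Gn)) <= 1 + c0 * x).
  { unfold c0, Pn, Gn. rewrite <- f_n_split. pose proof (HN n ltac:(unfold n; lia) x ltac:(lra)).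
    pose proof (Rabs_erf_le x ltac:(lra)). pose proof (Rabs_triang (f_n n x - erf x) (erf x)).
    replace (f_n n x - erf x + erf x) with (f_n n x) in * by ring. lra. }
  assert (HSG : Rabs (Pn + Gn) <= / c0 + 1).
  { rewrite Rabs_mult, (Rabs_right (c0 * x)) in Hf by nra.
    apply (Rmult_le_reg_l (c0 * x)); [nra|].
    replace (c0 * x * (/ c0 + 1)) with (x + c0 * x) by (field; lra).
    pose proof (Rabs_pos (Pn + Gn)). nra. }
  pose proof (HK x Hx) as HG. fold Gn in HG.
  pose proof (Rabs_triang (Pn + Gn) (- Gn)). rewrite Rabs_Ropp in *.
  replace (Pn + Gn + - Gn) with Pn in * by ring. lra.
Qed.

Theorem theorem2p2 :
  (forall x : R, 0 < x ->
     is_lim_seq (fun n => Derive (eps_n n) x) 0 /\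
     is_lim_seq (fun n => eps_n n x) 0 /\
     is_lim_seq (fun n => f_n n x) (erf x)) /\
  ~ (forall e : R, 0 < e ->
       exists N : nat, forall n : nat, (N <= n)%nat ->
         forall x : R, 0 < x -> Rabs (f_n n x - erf x) < e).
Proof.
  split; [|exact f_n_not_uniform].
  intros x Hx. split; [now apply is_lim_seq_Derive_eps_n|]. split; [now apply is_lim_seq_eps_n|].
  apply (is_lim_seq_ext (fun n => erf x - eps_n n x)); [intros n; unfold eps_n; ring|].
  replace (Finite (erf x)) with (Rbar_minus (erf x) 0) by (simpl; f_equal; ring).
  apply is_lim_seq_minus'; [apply is_lim_seq_const|now apply is_lim_seq_eps_n].
Qed.
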